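(* Let $A$ be an infinite set, $\mathcal{L}\in V(\Omega(A))$, $I,J$ sets, $f:A^{I}\to A^{J}$ a uniformly continuous map, $\alpha:I\to\mathcal{L}$, $\beta:J\to\mathcal{L}$, and suppose $\beta=\overline{f}^{\mathcal{L}}(\alpha)$. Then (1) $\phi_{\beta}=\phi_{\alpha}\circ f^{\star}$; and (2) for every $R\in\{\emptyset\}\cup\bigcup\mathcal{P}(A,J)$, we have $R\in Z_{\beta}$ if and only if $f^{-1}(R)\in Z_{\alpha}$.
   Context: For each $a\in A$ let $\hat{a}$ be a constant symbol, and for each $n\geq1$ and each $h:A^{n}\to A$ let $\hat{h}$ be an $n$-ary operation symbol. $\Omega(A)$ is the algebra with universe $A$ interpreting $\hat{a}$ as $a$ and $\hat{h}$ as $h$; $V(\Omega(A))$ is the variety it generates. For $h:X\to Y$, $\Pi(h)$ is the partition of $X$ into nonempty fibers; for a partition $P$ of $Y$, $[h]_{-1}(P)=\{h^{-1}(R):R\in P\}\setminus\{\emptyset\}$. For $i_{1},\dots,i_{n}\in I$, $\mathcal{P}_{i_{1},\dots,i_{n}}$ is the partition of $A^{I}$ with $u,v$ in the same block iff $u(i_{k})=v(i_{k})$ for all $k$; $\mathcal{P}(A,I)$ is the filter of partitions of $A^{I}$ coarser than some $\mathcal{P}_{i_{1},\dots,i_{n}}$; $\bigcup\mathcal{P}(A,I)$ is the set of all blocks of partitions in it, and $\{\emptyset\}\cup\bigcup\mathcal{P}(A,I)$ is a Boolean algebra of subsets of $A^{I}$. $\mathbf{F}(A,I)=\{h\in A^{A^{I}}:\Pi(h)\in\mathcal{P}(A,I)\}$,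 a subalgebra of $\Omega(A)^{A^{I}}$, freely generated in $V(\Omega(A))$ by the projections $\pi_{i}(u)=u(i)$; each $h\in\mathbf{F}(A,I)$ has the form $\hat{r}^{\mathbf{F}(A,I)}(\pi_{i_{1}},\dots,\pi_{i_{n}})$. A map $h:A^{I}\to A^{J}$ is uniformly continuous if $[h]_{-1}(P)\in\mathcal{P}(A,I)$ for all $P\in\mathcal{P}(A,J)$; then each $\pi_{j}\circ h\in\mathbf{F}(A,I)$. For $h=\hat{r}^{\mathbf{F}(A,I)}(\pi_{i_{1}},\dots,\pi_{i_{n}})$, $\overline{h}^{\mathcal{L}}((\ell_{i})_{i\in I})=\hat{r}^{\mathcal{L}}(\ell_{i_{1}},\dots,\ell_{i_{n}})$ (well defined), and for uniformly continuous $f:A^{I}\to A^{J}$, $\overline{f}^{\mathcal{L}}(\alpha)=(\overline{\pi_{j}\circ f}^{\mathcal{L}}(\alpha))_{j\in J}\in\mathcal{L}^{J}$ for $\alpha\in\mathcal{L}^{I}$. For $\alpha:I\to\mathcal{L}$, $\phi_{\alpha}:\mathbf{F}(A,I)\to\mathcal{L}$ is the unique homomorphism with $\phi_{\alpha}(\pi_{i})=\alpha(i)$, and $Z_{\alpha}$ is the filter on $\{\emptyset\}\cup\bigcup\mathcal{P}(A,I)$ such that for $\ell,m\in\mathbf{F}(A,I)$, $\phi_{\alpha}(\ell)=\phi_{\alpha}(m)$ iff $\{u\in A^{I}:\ell(u)=m(u)\}\in Z_{\alpha}$ (so $\mathbf{F}(A,I)/Z_{\alpha}$ is the quotient by $\ker\phi_{\alpha}$);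 $\phi_{\beta},Z_{\beta}$ are defined analogously for $J$. For uniformly continuous $f:A^{I}\to A^{J}$, $f^{\star}:\mathbf{F}(A,J)\to\mathbf{F}(A,I)$ is $f^{\star}(g)=g\circ f$. *)

From mathcomp Require Import all_boot.
From Stdlib Require Lists.List.

Set Implicit Arguments.
Unset Strict Implicit.
Unset Printing Implicit Defensive.

(** * The signature of Omega(A): a constant symbol for each a : A and an
    n-ary operation symbol for each h : A^n -> A, n >= 1 (arities are
    written n.+1, tuples A^(n+1) as functions 'I_(n.+1) -> A). *)

Record OAlg (A : Type) := {
  carrier :> Type;
  cst : A -> carrier;
  op : forall n : nat, (('I_n.+1 -> A) -> A) -> ('I_n.+1 -> carrier) -> carrier
}.

Inductive term (A : Type) : Type :=
| tVar : nat -> term A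
| tCst : A -> term A
| tOp : forall n : nat, (('I_n.+1 -> A) -> A) -> ('I_n.+1 -> term A) -> term A.

Fixpoint eval (A : Type) (L : OAlg A) (v : nat -> L) (t : term A) : L :=
  match t with
  | tVar i => v i
  | tCst a => cst L a
  | tOp n r ts => @op A L n r (fun k => eval v (ts k))
  end.

Definition Omega (A : Type) : OAlg A :=
  {| carrier := A; cst := fun a => a; op := fun n r args => r args |}.

(** L belongs to the variety V(Omega(A)) generated by Omega(A), i.e.
    (Birkhoff) L satisfies every identity valid in Omega(A). *)
Definition inV (A : Type) (L : OAlg A) : Prop :=
  forall s t : term A,
    (forall v : nat -> A, @eval A (Omega A) v s = @eval A (Omega A) v t) ->
    forall v : nat -> L, @eval A L v s = @eval A L v t.

Definition infinite_type (A : Type) : Prop :=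
  forall l : list A, exists a : A, ~ Stdlib.Lists.List.In a l.

(** * Partitions of A^I, represented by their equivalence relations. *)

Definition is_equiv (X : Type) (E : X -> X -> Prop) : Prop :=
  (forall x, E x x) /\ (forall x y, E x y -> E y x) /\
  (forall x y z, E x y -> E y z -> E x z).

(** P(A,I): partitions coarser than some P_{i_1,...,i_n}. *)
Definition inP (A I : Type) (E : (I -> A) -> (I -> A) -> Prop) : Prop :=
  is_equiv E /\
  exists idxs : list I,
    forall u v : I -> A, (forall i, Stdlib.Lists.List.In i idxs -> u i = v i) -> E u v.

Definition inF (A I : Type) (h : (I -> A) -> A) : Prop :=
  inP (fun u v : I -> A => h u = h v).

Definition unif_cont (A I J : Type) (f : (I -> A) -> (J -> A)) : Prop :=
  forall E : (J -> A) -> (J -> A) -> Prop,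
    inP E -> inP (fun x y : I -> A => E (f x) (f y)).

(** Blocks of partitions in P(A,I), and the Boolean algebra
    {emptyset} \cup \bigcup P(A,I). *)
Definition isBlock (A I : Type) (S : (I -> A) -> Prop) : Prop :=
  exists E, @inP A I E /\ exists x, forall u, S u <-> E x u.

Definition inB (A I : Type) (S : (I -> A) -> Prop) : Prop :=
  (forall u, ~ S u) \/ isBlock S.

(** hbar^L(ell) = y, where h = r^(pi_{i_1},...,pi_{i_n}) (or h is the
    constant c^ when it depends on no coordinate).  Well defined for
    L in V(Omega(A)). *)
Definition hbar_rel (A I : Type) (L : OAlg A) (h : (I -> A) -> A)
    (ell : I -> L) (y : L) : Prop :=
  (exists (n : nat) (r : ('I_n.+1 -> A) -> A) (idx : 'I_n.+1 -> I),
      (forall u, h u = r (fun k => u (idx k))) /\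
      y = @op A L n r (fun k => ell (idx k)))
  \/ (exists c : A, (forall u, h u = c) /\ y = cst L c).

Definition fbar_rel (A I J : Type) (L : OAlg A) (f : (I -> A) -> (J -> A))
    (alpha : I -> L) (beta : J -> L) : Prop :=
  forall j : J, hbar_rel (fun u => f u j) alpha (beta j).

(** phi : F(A,I) -> L is a homomorphism (phi is given as a function on all
    of A^(A^I); only its values on F(A,I) matter). *)
Definition is_hom (A I : Type) (L : OAlg A) (phi : ((I -> A) -> A) -> L) : Prop :=
  (forall c : A, phi (fun _ => c) = cst L c) /\
  (forall (n : nat) (r : ('I_n.+1 -> A) -> A) (args : 'I_n.+1 -> (I -> A) -> A),
      (forall k, inF (args k)) ->
      phi (fun u => r (fun k => args k u)) = @op A L n r (fun k => phi (args k))).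

Definition is_phi (A I : Type) (L : OAlg A) (alpha : I -> L)
    (phi : ((I -> A) -> A) -> L) : Prop :=
  is_hom phi /\ forall i : I, phi (fun u => u i) = alpha i.

Definition is_filterB (A I : Type) (Z : ((I -> A) -> Prop) -> Prop) : Prop :=
  (forall S, Z S -> inB S) /\
  Z (fun _ => True) /\
  (forall S T, Z S -> inB T -> (forall u, S u -> T u) -> Z T) /\
  (forall S T, Z S -> Z T -> Z (fun u => S u /\ T u)).

Definition is_Z (A I : Type) (L : OAlg A) (phi : ((I -> A) -> A) -> L)
    (Z : ((I -> A) -> Prop) -> Prop) : Prop :=
  is_filterB Z /\
  forall l m : (I -> A) -> A, inF l -> inF m ->
    (phi l = phi m <-> Z (fun u => l u = m u)).

From Stdlib Require Import ClassicalEpsilon FunctionalExtensionality PropExtensionality.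
From mathcomp Require Import all_boot.

Set Implicit Arguments.
Unset Strict Implicit.
Unset Printing Implicit Defensive.

(* Every g in F(A,J) is constant or of the form r(pi_j1, ..., pi_jn), so a
   homomorphism on F(A,J) is determined by its values on the projections:
   phi_beta g = r^L(beta j1, ..., beta jn).  Since beta j = phi_alpha (pi_j o f)
   by the definition of fbar, this equals phi_alpha (g o f), which is (1).
   For (2), a set R of the Boolean algebra is the equaliser of its indicator
   function (with two distinct values of A) and a constant, both in F(A,J);
   so R lies in Z_beta iff phi_beta identifies them, iff (by (1)) phi_alpha
   identifies their composites with f, iff f^-1(R) lies in Z_alpha. *)

Lemma infinite_two_points (A : Type) : infinite_type A -> exists a b : A, a <> b.
Proof.
move=> Hinf; have [a _] := Hinf nil; have [b Hb] := Hinf (a :: nil).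
by exists a, b => Eab; apply: Hb; left.
Qed.

Lemma inF_const (A I : Type) (c : A) : inF (fun _ : I -> A => c).
Proof. by split; [split; [|split]; congruence | exists nil]. Qed.

Lemma inF_proj (A I : Type) (i : I) : inF (fun u : I -> A => u i).
Proof.
split; first by split; [|split]; congruence.
by exists (i :: nil) => u v H; apply: H; left.
Qed.

Lemma inF_comp (A I J : Type) (f : (I -> A) -> (J -> A)) (g : (J -> A) -> A) :
  unif_cont f -> inF g -> inF (fun u => g (f u)).
Proof. by move=> Hf; apply: Hf. Qed.

(* The coordinates of the finite support are enumerated by an ordinal; a
   tuple a is turned back into a point of A^J by choosing, for each j, an
   index k with idx k = j (any point agrees with u on the support). *)
Lemma inF_factor (A J : Type) (a0 : A) (g : (J -> A) -> A) : inF g ->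
  (exists c, forall u, g u = c) \/
  exists n (r : ('I_n.+1 -> A) -> A) (idx : 'I_n.+1 -> J),
    forall u, g u = r (fun k => u (idx k)).
Proof.
move=> [_ [[|j0 rest] Hsupp]].
  by left; exists (g (fun _ => a0)) => u; apply: Hsupp => i [].
right; exists (length rest).
pose idx (k : 'I_(length rest).+1) := List.nth k (j0 :: rest) j0.
pose point (a : 'I_(length rest).+1 -> A) (j : J) :=
  a (epsilon (inhabits ord0) (fun k => idx k = j)).
exists (fun a => g (point a)), idx => u.
apply: Hsupp => i Hi.
have [k [Hk Hnth]] := List.In_nth _ _ j0 Hi.
have Hk' : (k < (length rest).+1)%N by apply/ltP.
have Hidx : exists k0, idx k0 = i by exists (Ordinal Hk').
by rewrite /point (epsilon_spec (inhabits ord0) _ Hidx).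
Qed.

Lemma hom_const (A I : Type) (L : OAlg A) (phi : ((I -> A) -> A) -> L)
    (h : (I -> A) -> A) (c : A) :
  is_hom phi -> (forall u, h u = c) -> phi h = cst L c.
Proof.
move=> [Hcst _] Hh.
by have -> : h = (fun _ => c) by apply: functional_extensionality.
Qed.

Lemma hom_op (A I : Type) (L : OAlg A) (phi : ((I -> A) -> A) -> L)
    (h : (I -> A) -> A) n (r : ('I_n.+1 -> A) -> A)
    (args : 'I_n.+1 -> (I -> A) -> A) :
  is_hom phi -> (forall k, inF (args k)) ->
  (forall u, h u = r (fun k => args k u)) ->
  phi h = op r (fun k => phi (args k)).
Proof.
move=> [_ Hop] Hargs Hh.
have -> : h = (fun u => r (fun k => args k u)) by apply: functional_extensionality.
exact: Hop.
Qed.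

Lemma phi_hbar (A I : Type) (L : OAlg A) (alpha : I -> L)
    (phi : ((I -> A) -> A) -> L) (h : (I -> A) -> A) (y : L) :
  is_phi alpha phi -> hbar_rel h alpha y -> phi h = y.
Proof.
move=> [Hhom Hproj] [[n [r [idx [Hh ->]]]] | [c [Hh ->]]].
  rewrite (hom_op (args := fun k u => u (idx k)) Hhom _ Hh).
    by congr (op _ _); apply: functional_extensionality => k.
  by move=> k; apply: inF_proj.
exact: hom_const Hhom Hh.
Qed.

Lemma phi_comp (A I J : Type) (L : OAlg A) (f : (I -> A) -> (J -> A))
    (alpha : I -> L) (beta : J -> L)
    (phiA : ((I -> A) -> A) -> L) (phiB : ((J -> A) -> A) -> L) (a0 : A) :
  unif_cont f -> fbar_rel f alpha beta ->
  is_phi alpha phiA -> is_phi beta phiB ->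
  forall g : (J -> A) -> A, inF g -> phiB g = phiA (fun u => g (f u)).
Proof.
move=> Hf Hfb HphiA HphiB g Hg.
have [HhomA _] := HphiA; have [HhomB HprojB] := HphiB.
case: (inF_factor a0 Hg) => [[c Hc] | [n [r [idx Hr]]]].
  by rewrite (hom_const HhomA (c := c)) // (hom_const HhomB Hc).
rewrite (hom_op (args := fun k u => u (idx k)) HhomB _ Hr); last first.
  by move=> k; apply: inF_proj.
have Hcoords k : inF (fun u => f u (idx k)) := inF_comp Hf (inF_proj _ (idx k)).
have Hgf u : g (f u) = r (fun k => f u (idx k)) by rewrite Hr.
rewrite (hom_op HhomA Hcoords Hgf).
congr (op _ _); apply: functional_extensionality => k.
by rewrite HprojB (phi_hbar HphiA (Hfb (idx k))).
Qed.

Definition indicator (A X : Type) (a b : A) (R : X -> Prop) (u : X) : A :=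
  if excluded_middle_informative (R u) then a else b.

Section Indicator.

Variables (A X : Type) (a b : A) (R : X -> Prop).
Hypothesis ab : a <> b.

Lemma indicator_eq_left (u : X) : indicator a b R u = a <-> R u.
Proof.
rewrite /indicator; case: (excluded_middle_informative (R u)) => Hu; first by [].
by split=> // E; case: ab.
Qed.

Lemma indicator_kernel (u v : X) :
  indicator a b R u = indicator a b R v <-> (R u <-> R v).
Proof.
rewrite /indicator.
case: (excluded_middle_informative (R u)) => Hu;
  case: (excluded_middle_informative (R v)) => Hv /=; split=> E; try tauto;
  by case: ab; rewrite E.
Qed.

End Indicator.

Lemma inF_indicator (A I : Type) (a b : A) (R : (I -> A) -> Prop) :
  a <> b -> inB R -> inF (indicator a b R).
Proof.
move=> ab HR; split; first by split; [|split]; congruence.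
case: HR => [Hempty | [E [[[_ [Esym Etrans]] [idxs Hsupp]] [x Hx]]]].
  by exists nil => u v _; apply/indicator_kernel => //; split => /Hempty.
exists idxs => u v Huv; apply/indicator_kernel => //; rewrite !Hx.
have Euv := Hsupp u v Huv.
by split => Hxu; [apply: Etrans Hxu Euv | apply: Etrans Hxu (Esym _ _ Euv)].
Qed.

Lemma Z_iff_indicator (A I : Type) (L : OAlg A) (phi : ((I -> A) -> A) -> L)
    (Z : ((I -> A) -> Prop) -> Prop) (a b : A) (R : (I -> A) -> Prop) :
  is_Z phi Z -> a <> b -> inF (indicator a b R) ->
  (Z R <-> phi (indicator a b R) = phi (fun _ => a)).
Proof.
move=> [_ HZ] ab HindF.
have HR : (fun u => indicator a b R u = a) = R.
  apply: functional_extensionality => u; apply: propositional_extensionality.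
  exact: indicator_eq_left.
rewrite -{1}HR.
by apply: iff_sym; apply: HZ => //; apply: inF_const.
Qed.

Theorem mainTheorem7 (A : Type) (L : OAlg A) (I J : Type)
    (f : (I -> A) -> (J -> A)) (alpha : I -> L) (beta : J -> L)
    (phiA : ((I -> A) -> A) -> L) (phiB : ((J -> A) -> A) -> L)
    (ZA : ((I -> A) -> Prop) -> Prop) (ZB : ((J -> A) -> Prop) -> Prop) :
  infinite_type A ->
  inV L ->
  unif_cont f ->
  fbar_rel f alpha beta ->
  is_phi alpha phiA -> is_phi beta phiB ->
  is_Z phiA ZA -> is_Z phiB ZB ->
  (forall g : (J -> A) -> A, inF g -> phiB g = phiA (fun u => g (f u))) /\
  (forall R : (J -> A) -> Prop, inB R ->
     (ZB R <-> ZA (fun u => R (f u)))).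
Proof.
(* [inV L] only guarantees that fbar is well defined; here fbar is given as
   the relation [fbar_rel]. *)
move=> Hinf _ Hf Hfb HphiA HphiB HZA HZB.
have [a [b ab]] := infinite_two_points Hinf.
have Hcomp := phi_comp a Hf Hfb HphiA HphiB.
split=> // R HR.
have HindF := inF_indicator ab HR.
apply: (iff_trans (Z_iff_indicator HZB ab HindF)).
apply: iff_sym; apply: (iff_trans (Z_iff_indicator HZA ab (inF_comp Hf HindF))).
by rewrite !Hcomp //; apply: inF_const.
Qed.
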